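(* For each $k\le n$, the optimal value of $$\mathcal U^\star_k=\min_{x\in\mathbb R^n,\,y\in\mathbb R^k}\ \langle c,x\rangle+\sum_{i=1}^k\lambda_iy_i^2+\eta^{-1}\|x\|_2^2+\theta\|x\|_0\ \text{ s.t. } Ax\le b,\ \sqrt{\lambda_i}y_i=\sqrt{\lambda_i}\langle v_i,x\rangle,\ i=1,\dots,k$$ satisfies $\mathcal U^\star_k=\min_{z\in\{0,1\}^n}\max_{\alpha\in\mathbb R^k,\beta\in\mathbb R^m_+}H(z,\alpha,\beta)$, where $$H(z,\alpha,\beta)=\theta\sum_{j=1}^nz_j-\beta^\top b-\tfrac14\|\alpha\|_2^2-\tfrac{\eta}{4}(c+V\sqrt\Lambda\alpha+A^\top\beta)^\top\mathrm{diag}(z)(c+V\sqrt\Lambda\alpha+A^\top\beta).$$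
   Context: Let $Q\in\mathbb R^{n\times n}$ be symmetric positive semidefinite with eigendecomposition $Q=\sum_{i=1}^n\lambda_i v_iv_i^\top$, $\lambda_1\ge\cdots\ge\lambda_n\ge0$, $\{v_i\}$ orthonormal. Let $c\in\mathbb R^n$, $A\in\mathbb R^{m\times n}$, $b\in\mathbb R^m$, $\eta>0$, $\theta>0$, $k\le n$, $V=[v_1,\dots,v_k]$, $\Lambda=\mathrm{diag}(\lambda_1,\dots,\lambda_k)$. $\|x\|_0$ is the number of nonzero entries of $x$; infeasible problems have value $+\infty$. *)

From HB Require Import structures.
From mathcomp Require Import all_boot all_order all_algebra.
From mathcomp Require Import classical_sets boolp reals ereal.
Set Implicit Arguments. Unset Strict Implicit. Unset Printing Implicit Defensive.
Import Order.TTheory GRing.Theory Num.Theory.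
Local Open Scope ring_scope.
Local Open Scope classical_set_scope.

Section Defs.
Variable R : realType.

Definition dotv (p : nat) (u w : 'cV[R]_p) : R := \sum_(j < p) u j 0 * w j 0.

Definition sqnorm (p : nat) (u : 'cV[R]_p) : R := \sum_(j < p) u j 0 ^+ 2.

Definition l0norm (p : nat) (x : 'cV[R]_p) : nat := #|[set j : 'I_p | x j 0 != 0]|.

Definition Vmat (n k : nat) (hk : (k <= n)%N) (v : 'I_n -> 'cV[R]_n) : 'M[R]_(n, k) :=
  \matrix_(i < n, j < k) v (widen_ord hk j) i 0.

Definition sqrtLam (n k : nat) (hk : (k <= n)%N) (lam : 'I_n -> R) : 'M[R]_k :=
  \matrix_(i < k, j < k) (if i == j then Num.sqrt (lam (widen_ord hk i)) else 0).

Definition Uobj (n m k : nat) (hk : (k <= n)%N) (lam : 'I_n -> R)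
  (c : 'cV[R]_n) (eta theta : R) (x : 'cV[R]_n) (y : 'cV[R]_k) : R :=
  dotv c x + \sum_(i < k) lam (widen_ord hk i) * y i 0 ^+ 2
  + eta^-1 * sqnorm x + theta * (l0norm x)%:R.

Definition Ufeas (n m k : nat) (hk : (k <= n)%N) (lam : 'I_n -> R)
  (v : 'I_n -> 'cV[R]_n) (A : 'M[R]_(m, n)) (b : 'cV[R]_m)
  (x : 'cV[R]_n) (y : 'cV[R]_k) : Prop :=
  (forall i : 'I_m, (A *m x) i 0 <= b i 0) /\
  (forall i : 'I_k, Num.sqrt (lam (widen_ord hk i)) * y i 0
                    = Num.sqrt (lam (widen_ord hk i)) * dotv (v (widen_ord hk i)) x).

(* Optimal value U*_k (infimum in extended reals; +oo if infeasible) *)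
Definition Ustar (n m k : nat) (hk : (k <= n)%N) (lam : 'I_n -> R)
  (v : 'I_n -> 'cV[R]_n) (c : 'cV[R]_n) (A : 'M[R]_(m, n)) (b : 'cV[R]_m)
  (eta theta : R) : \bar R :=
  ereal_inf [set r : \bar R | exists (x : 'cV[R]_n) (y : 'cV[R]_k),
              Ufeas hk lam v A b x y /\ r = (Uobj m hk lam c eta theta x y)%:E].

Definition Hfun (n m k : nat) (hk : (k <= n)%N) (lam : 'I_n -> R)
  (v : 'I_n -> 'cV[R]_n) (c : 'cV[R]_n) (A : 'M[R]_(m, n)) (b : 'cV[R]_m)
  (eta theta : R) (z : {ffun 'I_n -> bool}) (alpha : 'cV[R]_k) (beta : 'cV[R]_m) : R :=
  let w := c + Vmat hk v *m sqrtLam hk lam *m alpha + A^T *m beta in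
  theta * (\sum_(j < n) (z j)%:R) - dotv beta b - 4^-1 * sqnorm alpha
  - eta / 4 * (\sum_(j < n) (z j)%:R * w j 0 ^+ 2).

Definition minmaxH (n m k : nat) (hk : (k <= n)%N) (lam : 'I_n -> R)
  (v : 'I_n -> 'cV[R]_n) (c : 'cV[R]_n) (A : 'M[R]_(m, n)) (b : 'cV[R]_m)
  (eta theta : R) : \bar R :=
  \big[Order.min/+oo%E]_(z : {ffun 'I_n -> bool})
    ereal_sup [set r : \bar R | exists (alpha : 'cV[R]_k) (beta : 'cV[R]_m),
              (forall i, 0 <= beta i 0) /\
              r = (Hfun hk lam v c A b eta theta z alpha beta)%:E].

End Defs.

From HB Require Import structures.
From mathcomp Require Import all_boot all_order all_algebra.
From mathcomp Require Import classical_sets boolp reals ereal.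
From mathcomp Require Import ring lra.
Set Implicit Arguments. Unset Strict Implicit. Unset Printing Implicit Defensive.
Import Order.TTheory GRing.Theory Num.Theory.
Local Open Scope ring_scope.

(* Weak duality ("min-max <= U*").  For a feasible (x, y) let z be the support
   pattern of x.  Substituting the constraints into the Lagrangian and
   completing the square coordinatewise shows H(z, alpha, beta) <= objective,
   for every alpha and every beta >= 0.

   Strong duality ("U* <= max_alpha,beta H(z, ., .)" for every z).  Restricted
   to points supported in z, U*_k is a strongly convex quadratic program; after
   the change of variables x = sqrt(eta) u it becomes the Euclidean projection
   of an anchor point onto a polyhedron in R^(n+k).  We prove, by induction on
   the number of constraints, a projection theorem with a Farkas alternative:
   a linear system is either certifiably empty, or the projection onto its
   solution set exists together with KKT multipliers.  In the first case the
   certificate makes H(z, 0, s beta) unbounded as s -> oo; in the second the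
   multipliers (alpha, beta) give a feasible point whose objective equals
   H(z, alpha, beta) up to the term theta (sum z - ||x||_0) >= 0. *)

Section InnerProduct.
Variables (R : realType) (N : nat).
Implicit Types (u w s t a : 'cV[R]_N) (x : R).

Lemma dotvC u w : dotv u w = dotv w u.
Proof. by apply: eq_bigr => j _; rewrite mulrC. Qed.

Lemma dotvDl u1 u2 w : dotv (u1 + u2) w = dotv u1 w + dotv u2 w.
Proof. by rewrite /dotv -big_split; apply: eq_bigr => j _; rewrite mxE mulrDl. Qed.

Lemma dotvNl u w : dotv (- u) w = - dotv u w.
Proof. by rewrite /dotv -sumrN; apply: eq_bigr => j _; rewrite mxE mulNr. Qed.

Lemma dotvZl x u w : dotv (x *: u) w = x * dotv u w.
Proof. by rewrite /dotv mulr_sumr; apply: eq_bigr => j _; rewrite mxE mulrA. Qed.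

Lemma dotvBl u1 u2 w : dotv (u1 - u2) w = dotv u1 w - dotv u2 w.
Proof. by rewrite dotvDl dotvNl. Qed.

Lemma dotvDr u w1 w2 : dotv u (w1 + w2) = dotv u w1 + dotv u w2.
Proof. by rewrite dotvC dotvDl !(dotvC _ u). Qed.

Lemma dotvBr u w1 w2 : dotv u (w1 - w2) = dotv u w1 - dotv u w2.
Proof. by rewrite dotvC dotvBl !(dotvC _ u). Qed.

Lemma dotvZr x u w : dotv u (x *: w) = x * dotv u w.
Proof. by rewrite dotvC dotvZl dotvC. Qed.

Lemma dotv0l w : dotv 0 w = 0.
Proof. by rewrite -(scale0r 0) dotvZl mul0r. Qed.

Lemma dotv_ge0 u : 0 <= dotv u u.
Proof. by apply: sumr_ge0 => j _; rewrite -expr2 sqr_ge0. Qed.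

Lemma dotv_eq0 u : dotv u u = 0 -> u = 0.
Proof.
move=> u0; apply/matrixP => i j; rewrite mxE (ord1 j).
have sq_ge0 (j0 : 'I_N) : predT j0 -> 0 <= u j0 0 * u j0 0 by rewrite -expr2 sqr_ge0.
move: (@psumr_eq0P _ _ predT (fun j0 => u j0 0 * u j0 0) sq_ge0 u0 i isT) => /eqP.
by rewrite mulf_eq0 orbb => /eqP.
Qed.

Lemma sqdist_split s a t W : t = a - 2^-1 *: W ->
  dotv (s - a) (s - a) = dotv (s - t) (s - t) + dotv (t - a) (t - a) - dotv W (s - t).
Proof.
move=> ->; rewrite /dotv -big_split -sumrB; apply: eq_bigr => j _; rewrite !mxE /=.
by field.
Qed.

Lemma dotv_col (p q : nat) (X : 'cV[R]_p) (Y : 'cV[R]_q) (t : 'cV[R]_(p + q)) :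
  dotv (col_mx X Y) t =
  \sum_(j < p) X j 0 * t (lshift q j) 0 + \sum_(l < q) Y l 0 * t (rshift p l) 0.
Proof.
rewrite /dotv big_split_ord /=.
by congr (_ + _); apply: eq_bigr => j _; rewrite ?col_mxEu ?col_mxEd.
Qed.

End InnerProduct.

(* Systems of linear constraints given by nat-indexed families of vectors, of
   which the first m (resp. p) members are used, so that constraints can be
   appended one at a time in inductions. *)
Section Polyhedra.
Variables (R : realType) (N : nat).
Notation vec := 'cV[R]_N.
Implicit Types (G E : nat -> vec) (h f mu nu : nat -> R) (m p : nat) (a s t : vec).

Definition comb G mu m : vec := \sum_(i < m) mu i *: G i.
Definition combr h mu m : R := \sum_(i < m) mu i * h i.

Lemma comb0 G mu : comb G mu 0 = 0. Proof. by rewrite /comb big_ord0. Qed.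

Lemma combr0 h mu : combr h mu 0 = 0. Proof. by rewrite /combr big_ord0. Qed.

Lemma combZ E nu x p : comb E (fun i => x * nu i) p = x *: comb E nu p.
Proof. by rewrite /comb scaler_sumr; apply: eq_bigr => i _; rewrite scalerA. Qed.

Lemma combrZ f nu x p : combr f (fun i => x * nu i) p = x * combr f nu p.
Proof. by rewrite /combr mulr_sumr; apply: eq_bigr => i _; rewrite mulrA. Qed.

Lemma comb_axpy E mu nu x p :
  comb E (fun i => mu i + x * nu i) p = comb E mu p + x *: comb E nu p.
Proof. by rewrite -combZ /comb -big_split; apply: eq_bigr => i _; rewrite scalerDl. Qed.

Definition ext {X : Type} (F : nat -> X) (x : X) (m : nat) : nat -> X :=
  fun i => if (i < m)%N then F i else x.

Lemma ext_lt {X : Type} (F : nat -> X) x m i : (i < m)%N -> ext F x m i = F i.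
Proof. by rewrite /ext => ->. Qed.

Lemma ext_last {X : Type} (F : nat -> X) x m : ext F x m m = x.
Proof. by rewrite /ext ltnn. Qed.

Definition slack G h mu m s : R := \sum_(i < m) mu i * (h i - dotv (G i) s).

Lemma slackE G h mu m s : slack G h mu m s = combr h mu m - dotv (comb G mu m) s.
Proof.
rewrite /slack /combr /comb; elim: m => [|m IH]; first by rewrite !big_ord0 dotv0l subr0.
by rewrite !big_ord_recr /= IH dotvDl dotvZl; ring.
Qed.

Lemma slack_ge0 G h mu m s : (forall i, (i < m)%N -> 0 <= mu i) ->
  (forall i, (i < m)%N -> dotv (G i) s <= h i) -> 0 <= slack G h mu m s.
Proof.
move=> mu_ge0 Gs_le; apply: sumr_ge0 => i _.
by rewrite mulr_ge0 ?mu_ge0 // subr_ge0 Gs_le.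
Qed.

Lemma slack_eq0 G h mu m s : (forall i, (i < m)%N -> dotv (G i) s = h i) ->
  slack G h mu m s = 0.
Proof. by move=> Gs_eq; rewrite /slack big1 // => i _; rewrite Gs_eq // subrr mulr0. Qed.

Section Append.
Variables (G : nat -> vec) (h mu : nat -> R) (m : nat).

Lemma comb_ext x : comb G (ext mu x m) m.+1 = comb G mu m + x *: G m.
Proof.
rewrite /comb big_ord_recr /= ext_last; congr (_ + _).
by apply: eq_bigr => i _; rewrite ext_lt.
Qed.

Lemma comb_extF g : comb (ext G g m) mu m.+1 = comb G mu m + mu m *: g.
Proof.
rewrite /comb big_ord_recr /= ext_last; congr (_ + _).
by apply: eq_bigr => i _; rewrite ext_lt.
Qed.

Lemma combr_ext x : combr h (ext mu x m) m.+1 = combr h mu m + x * h m.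
Proof.
rewrite /combr big_ord_recr /= ext_last; congr (_ + _).
by apply: eq_bigr => i _; rewrite ext_lt.
Qed.

Lemma combr_extF c : combr (ext h c m) mu m.+1 = combr h mu m + mu m * c.
Proof.
rewrite /combr big_ord_recr /= ext_last; congr (_ + _).
by apply: eq_bigr => i _; rewrite ext_lt.
Qed.

Lemma slack_ext x s :
  slack G h (ext mu x m) m.+1 s = slack G h mu m s + x * (h m - dotv (G m) s).
Proof.
rewrite /slack big_ord_recr /= ext_last; congr (_ + _).
by apply: eq_bigr => i _; rewrite ext_lt.
Qed.

Lemma slack_extF g c s :
  slack (ext G g m) (ext h c m) mu m.+1 s = slack G h mu m s + mu m * (c - dotv g s).
Proof.
rewrite /slack big_ord_recr /= !ext_last; congr (_ + _).
by apply: eq_bigr => i _; rewrite !ext_lt.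
Qed.

End Append.

Definition feasible G h m E f p t :=
  (forall i, (i < m)%N -> dotv (G i) t <= h i) /\
  (forall i, (i < p)%N -> dotv (E i) t = f i).

Definition infeas_cert G h m E f p :=
  exists mu nu, (forall i, (i < m)%N -> 0 <= mu i) /\
    comb G mu m + comb E nu p = 0 /\ combr h mu m + combr f nu p < 0.

Lemma feasible_step G h m E f p t : feasible G h m E f p t ->
  dotv (G m) t <= h m -> feasible G h m.+1 E f p t.
Proof.
case=> Gt Et Gmt; split=> // i; rewrite ltnS leq_eqVlt => /orP[/eqP -> //|].
exact: Gt.
Qed.

Lemma feasible_step_eq G h m E f p t : feasible G h m E f p t ->
  dotv (E p) t = f p -> feasible G h m E f p.+1 t.
Proof.
case=> Gt Et Ept; split=> // i; rewrite ltnS leq_eqVlt => /orP[/eqP -> //|].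
exact: Et.
Qed.

Lemma feasible_extF G h m E f p g c t :
  feasible G h m (ext E g p) (ext f c p) p.+1 t -> feasible G h m E f p t /\ dotv g t = c.
Proof.
case=> Gt Et; split; last by have := Et p (ltnSn p); rewrite !ext_last.
by split=> // i ip; have := Et i (ltnW ip); rewrite !ext_lt.
Qed.

(* A linear system with zero right-hand side always has a solution, so it
   admits no certificate of emptiness. *)
Lemma homogeneous_no_cert G h E p : ~ infeas_cert G h 0 E (fun=> 0) p.
Proof.
case=> mu [nu [_ [_]]]; rewrite combr0 add0r /combr big1 ?ltxx // => i _.
exact: mulr0.
Qed.

(* t is the projection of a onto the polyhedron, with KKT multipliers mu, nu:
   a - t = (sum mu_i G_i + sum nu_i E_i)/2 and complementary slackness. *)
Definition kkt G h m E f p a t mu nu :=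
  [/\ forall i, (i < m)%N -> 0 <= mu i, feasible G h m E f p t,
      t = a - 2^-1 *: (comb G mu m + comb E nu p) & slack G h mu m t = 0].

Definition projects G h m E f p a := exists t mu nu, kkt G h m E f p a t mu nu.

Lemma cert_slack G h m E f p mu nu s : comb G mu m + comb E nu p = 0 ->
  slack G h mu m s + slack E f nu p s = combr h mu m + combr f nu p.
Proof. by move=> W0; rewrite !slackE addrACA -opprD -dotvDl W0 dotv0l subr0. Qed.

Lemma kkt_sqdist G h m E f p a t mu nu s : kkt G h m E f p a t mu nu ->
  dotv (s - a) (s - a) = dotv (s - t) (s - t) + dotv (t - a) (t - a)
                         + (slack G h mu m s + slack E f nu p s).
Proof.
case=> _ [_ Et] tE cs; rewrite (sqdist_split s tE); congr (_ + _).
have cs' : slack E f nu p t = 0 by exact: slack_eq0.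
rewrite !slackE in cs cs' *; rewrite dotvBr !dotvDl; lra.
Qed.

Section EqualityStep.
Variables (G : nat -> vec) (h : nat -> R) (E : nat -> vec) (f : nat -> R) (p : nat).
Variables (a t : vec) (mu nu : nat -> R).
Hypothesis Kt : kkt G h 0 E f p a t mu nu.

(* Appending E_p when E_p lies in the span of E_0, ..., E_{p-1}: the new
   equation is either implied or contradicts the previous ones. *)
Lemma eq_step_dependent mu' nu' : kkt G h 0 E (fun=> 0) p (E p) 0 mu' nu' ->
  infeas_cert G h 0 E f p.+1 \/ projects G h 0 E f p.+1 a.
Proof.
case: Kt => mu_ge0 [_ Et] tE cs [_ _ qE _].
have Ep : E p = 2^-1 *: comb E nu' p.
  by move: qE; rewrite comb0 add0r => /eqP; rewrite eq_sym subr_eq0 => /eqP.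
have Ept : dotv (E p) t = 2^-1 * combr f nu' p.
  have := slack_eq0 nu' Et; rewrite slackE => /eqP; rewrite subr_eq0 => /eqP.
  by rewrite Ep dotvZl => ->.
set d := dotv (E p) t - f p.
have [d0|d_neq0] := eqVneq d 0.
  right; exists t, mu, (ext nu 0 p); split=> //.
    by apply: feasible_step_eq => //; apply/eqP; rewrite -subr_eq0 -/d d0.
  by rewrite comb_ext scale0r addr0.
left; exists mu, (ext (fun i => (- d / 2) * nu' i) d p); split=> //.
rewrite comb0 combr0 !add0r comb_ext combr_ext combZ combrZ; split.
  by rewrite Ep scalerA -scalerDl mulNr addNr scale0r.
have -> : combr f nu' p = 2 * dotv (E p) t by rewrite Ept; field.
have -> : f p = dotv (E p) t - d by rewrite /d opprB addrC subrK.
have : 0 < d * d by rewrite -expr2 exprn_even_gt0.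
move: (d) => dd; lra.
Qed.

(* Appending E_p when its residual q (the part orthogonal to E_0, ...,
   E_{p-1}) is nonzero: move t along q until the new equation holds. *)
Lemma eq_step_independent q mu' nu' : q != 0 ->
  kkt G h 0 E (fun=> 0) p (E p) q mu' nu' -> projects G h 0 E f p.+1 a.
Proof.
case: Kt => mu_ge0 [_ Et] tE _ q_neq0 [_ [_ Eq] qE _].
have qq_neq0 : dotv q q != 0 by apply: contra q_neq0 => /eqP/dotv_eq0 ->.
have Epq : dotv (E p) q = dotv q q.
  have := slack_eq0 nu' Eq; rewrite slackE /combr big1 => [|i _]; last exact: mulr0.
  rewrite sub0r => /eqP; rewrite oppr_eq0 => /eqP combq0.
  have -> : E p = q + 2^-1 *: comb E nu' p by rewrite qE comb0 add0r subrK.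
  by rewrite dotvDl dotvZl combq0 mulr0 addr0.
set th := (f p - dotv (E p) t) / dotv q q.
exists (t + th *: q), mu, (ext (fun i => nu i + th * nu' i) (- (2 * th)) p).
split=> //.
- apply: feasible_step_eq.
    by split=> // i ip; rewrite dotvDr dotvZr Et // Eq // mulr0 addr0.
  by rewrite dotvDr dotvZr Epq /th mulfVK // addrC subrK.
- rewrite comb_ext comb_axpy {1}tE qE !comb0 !add0r.
  move: (comb E nu p) (comb E nu' p) => C1 C2.
  by apply/matrixP => i j; rewrite !mxE /=; field.
- by rewrite /slack big_ord0.
Qed.

End EqualityStep.

Lemma projection_alternative_eq G h E f p a :
  infeas_cert G h 0 E f p \/ projects G h 0 E f p a.
Proof.
elim: p f a => [|p IH] f a.
  right; exists a, (fun=> 0), (fun=> 0); split=> //.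
    by rewrite !comb0 addr0 scaler0 subr0.
  by rewrite /slack big_ord0.
case: (IH f a) => [[mu [nu [mu_ge0 [W0 neg]]]] | [t [mu [nu Kt]]]].
  left; exists mu, (ext nu 0 p); split=> //.
  by rewrite comb_ext combr_ext scale0r mul0r !addr0.
case: (IH (fun=> 0) (E p)) => [/homogeneous_no_cert [] | [q [mu' [nu' Kq]]]].
have [q0|q_neq0] := eqVneq q 0.
  by rewrite q0 in Kq; apply: (eq_step_dependent Kt); exact: Kq.
by right; apply: (eq_step_independent Kt q_neq0); exact: Kq.
Qed.

Section InequalityStep.
Variables (G : nat -> vec) (h : nat -> R) (m : nat) (E : nat -> vec) (f : nat -> R).
Variables (p : nat) (a : vec).

Lemma cert_ext_zero : infeas_cert G h m E f p -> infeas_cert G h m.+1 E f p.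
Proof.
case=> mu [nu [mu_ge0 [W0 neg]]]; exists (ext mu 0 m), nu; split; last first.
  by rewrite comb_ext combr_ext scale0r mul0r !addr0.
by move=> i _; rewrite /ext; case: ifP => // /mu_ge0.
Qed.

Lemma kkt_ext_zero t mu nu : kkt G h m E f p a t mu nu ->
  dotv (G m) t <= h m -> kkt G h m.+1 E f p a t (ext mu 0 m) nu.
Proof.
case=> mu_ge0 Ft tE cs Gmt; split.
- by move=> i _; rewrite /ext; case: ifP => // /mu_ge0.
- exact: feasible_step.
- by rewrite comb_ext scale0r addr0.
- by rewrite slack_ext mul0r addr0.
Qed.

(* Suppose the projection t onto the first m inequalities violates the
   (m+1)-st one.  Then that constraint is active at the true projection: we
   treat it as an equation, and the sign of its multiplier is forced. *)
Lemma ineq_step_cert t : feasible G h m E f p t -> h m < dotv (G m) t ->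
  infeas_cert G h m (ext E (G m) p) (ext f (h m) p) p.+1 ->
  infeas_cert G h m.+1 E f p.
Proof.
case=> Gt Et Gmt [mu' [nu' [mu_ge0 [W0 neg]]]].
have := cert_slack h (ext f (h m) p) t W0; rewrite slack_extF (slack_eq0 nu' Et) add0r.
have := slack_ge0 (s := t) mu_ge0 Gt; move: (slack _ _ _ _ t) => sG sG_ge0 eq_val.
have nu'p_gt0 : 0 < nu' p by nra.
rewrite comb_extF in W0; rewrite combr_extF in neg.
exists (ext mu' (nu' p) m), nu'; split; last split.
- by move=> i _; rewrite /ext; case: ifP => [/mu_ge0|_] //; exact: ltW.
- by rewrite comb_ext addrAC -addrA.
- by rewrite combr_ext addrAC -addrA.
Qed.

Lemma ineq_step_kkt t mu nu t' mu' nu' : kkt G h m E f p a t mu nu ->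
  h m < dotv (G m) t ->
  kkt G h m (ext E (G m) p) (ext f (h m) p) p.+1 a t' mu' nu' ->
  projects G h m.+1 E f p a.
Proof.
move=> Kt Gmt Kt'; have Kt_ := Kt; have Kt'_ := Kt'.
case: Kt_ => mu_ge0 [Gt Et] _ _; case: Kt'_ => mu'_ge0 Ft' t'E cs'.
have [[Gt' Et'] Gmt'] := feasible_extF Ft'.
have nu'p_ge0 : 0 <= nu' p.
  have d1 := kkt_sqdist t' Kt; have d2 := kkt_sqdist t Kt'.
  rewrite slack_extF (slack_eq0 _ Et) (slack_eq0 _ Et') ?add0r ?addr0 in d1 d2.
  have := slack_ge0 (s := t') mu_ge0 Gt'; have := slack_ge0 (s := t) mu'_ge0 Gt.
  have := dotv_ge0 (t' - t); have := dotv_ge0 (t - t'); nra.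
exists t', (ext mu' (nu' p) m), nu'; split.
- by move=> i _; rewrite /ext; case: ifP => [/mu'_ge0|_].
- by apply: feasible_step; rewrite ?Gmt'.
- by rewrite t'E comb_ext comb_extF addrA addrAC.
- by rewrite slack_ext cs' Gmt' subrr mulr0 addr0.
Qed.

End InequalityStep.

Theorem projection_alternative G h m E f p a :
  infeas_cert G h m E f p \/ projects G h m E f p a.
Proof.
elim: m E f p => [|m IH] E f p; first exact: projection_alternative_eq.
case: (IH E f p) => [cert | [t [mu [nu Kt]]]]; first by left; exact: cert_ext_zero.
have [Gmt|Gmt] := leP (dotv (G m) t) (h m).
  by right; exists t, (ext mu 0 m), nu; exact: kkt_ext_zero.
have [_ Ft _ _] := Kt.
case: (IH (ext E (G m) p) (ext f (h m) p) p.+1) => [cert | [t' [mu' [nu' Kt']]]].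
  by left; exact: ineq_step_cert Ft Gmt cert.
by right; exact: ineq_step_kkt Kt Gmt Kt'.
Qed.

End Polyhedra.

(* Completing the square in the x-variables of the Lagrangian. *)
Lemma quad_x_ge0 (R : realFieldType) (e w x : R) : 0 < e ->
  0 <= w * x + e^-1 * x ^+ 2 + e / 4 * w ^+ 2.
Proof.
move=> e_gt0; have -> : w * x + e^-1 * x ^+ 2 + e / 4 * w ^+ 2 = e^-1 * (x + e / 2 * w) ^+ 2.
  by field; rewrite gt_eqF.
by apply: mulr_ge0; [rewrite invr_ge0 ltW | exact: sqr_ge0].
Qed.

(* Completing the square in the y-variables of the Lagrangian. *)
Lemma quad_y_ge0 (R : realFieldType) (s a : R) : 0 <= s ^+ 2 - a * s + 4^-1 * a ^+ 2.
Proof.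
have -> : s ^+ 2 - a * s + 4^-1 * a ^+ 2 = (s - 2^-1 * a) ^+ 2 by field.
exact: sqr_ge0.
Qed.

Lemma ereal_sup_unbounded (R : realType) (S : set (\bar R)) :
  (forall r : R, exists2 e, S e & (r%:E <= e)%E) -> ereal_sup S = +oo%E.
Proof.
move=> unbnd; have ub e : S e -> (e <= ereal_sup S)%E by exact: ereal_sup_ubound.
case E: (ereal_sup S) => [x| |] //.
  have [e Se le_e] := unbnd (x + 1); have := le_trans le_e (ub e Se).
  by rewrite E lee_fin gerDl ler10.
by have [e Se le_e] := unbnd 0; have := le_trans le_e (ub e Se); rewrite E.
Qed.

Section Duality.
Variables (R : realType) (n m k : nat) (hk : (k <= n)%N) (lam : 'I_n -> R).
Variables (v : 'I_n -> 'cV[R]_n) (c : 'cV[R]_n) (A : 'M[R]_(m, n)) (b : 'cV[R]_m).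
Variables (eta theta : R).
Hypothesis lam_ge0 : forall i, 0 <= lam i.
Hypothesis eta_gt0 : 0 < eta.
Hypothesis theta_gt0 : 0 < theta.

Implicit Types (x : 'cV[R]_n) (y al : 'cV[R]_k) (be : 'cV[R]_m).

Let sl (l : 'I_k) : R := Num.sqrt (lam (widen_ord hk l)).
Let vv (l : 'I_k) : 'cV[R]_n := v (widen_ord hk l).

Lemma sl_sq l : sl l ^+ 2 = lam (widen_ord hk l).
Proof. exact: sqr_sqrtr. Qed.

Definition wvec (al : 'cV[R]_k) (be : 'cV[R]_m) : 'cV[R]_n :=
  c + Vmat hk v *m sqrtLam hk lam *m al + A^T *m be.

Lemma wvecE al be j : wvec al be j 0 =
  c j 0 + \sum_(l < k) vv l j 0 * (sl l * al l 0) + \sum_(i < m) A i j * be i 0.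
Proof.
rewrite !mxE; congr (_ + _ + _); apply: eq_bigr => l _; last by rewrite mxE.
rewrite mxE (bigD1 l) //= big1 => [|l' l'_neq]; first by rewrite !mxE eqxx addr0 -mulrA.
by rewrite !mxE (negbTE l'_neq) mulr0.
Qed.

(* The Lagrangian of U*_k with multipliers alpha (for the y-equations) and
   beta (for Ax <= b) only involves x through <w, x>. *)
Lemma lagrangian_identity al be x : dotv c x =
  \sum_(j < n) wvec al be j 0 * x j 0 - \sum_(l < k) al l 0 * (sl l * dotv (vv l) x)
  - \sum_(i < m) be i 0 * (A *m x) i 0.
Proof.
have V_part : \sum_(j < n) (\sum_(l < k) vv l j 0 * (sl l * al l 0)) * x j 0 =
    \sum_(l < k) al l 0 * (sl l * dotv (vv l) x).
  under eq_bigr do rewrite mulr_suml.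
  rewrite exchange_big; apply: eq_bigr => l _; rewrite /dotv !mulr_sumr.
  by apply: eq_bigr => j _; ring.
have A_part : \sum_(j < n) (\sum_(i < m) A i j * be i 0) * x j 0 =
    \sum_(i < m) be i 0 * (A *m x) i 0.
  under eq_bigr do rewrite mulr_suml.
  rewrite exchange_big; apply: eq_bigr => i _; rewrite mxE mulr_sumr.
  by apply: eq_bigr => j _; ring.
have -> : \sum_(j < n) wvec al be j 0 * x j 0 = dotv c x
    + \sum_(j < n) (\sum_(l < k) vv l j 0 * (sl l * al l 0)) * x j 0
    + \sum_(j < n) (\sum_(i < m) A i j * be i 0) * x j 0.
  by rewrite /dotv -!big_split; apply: eq_bigr => j _; rewrite wvecE !mulrDl.
rewrite V_part A_part; ring.
Qed.

Lemma l0norm_sum x : (l0norm x)%:R = \sum_(j < n) (x j 0 != 0)%:R :> R.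
Proof.
rewrite /l0norm -sum1_card big_mkcond natr_sum; apply: eq_bigr => j _.
have [xj_neq0|xj_eq0] := boolP (x j 0 != 0); first by rewrite mem_set.
by rewrite ifF //; apply/negP => /set_mem; exact/negP.
Qed.

Definition supp (x : 'cV[R]_n) : {ffun 'I_n -> bool} := [ffun j => x j 0 != 0].

Lemma weak_duality x y al be : Ufeas hk lam v A b x y -> (forall i, 0 <= be i 0) ->
  Hfun hk lam v c A b eta theta (supp x) al be <= Uobj m hk lam c eta theta x y.
Proof.
case=> Ax_le y_eq be_ge0.
rewrite /Uobj /Hfun -/(wvec al be) (lagrangian_identity al be x).
set w := wvec al be.
have y_sq : \sum_(i < k) lam (widen_ord hk i) * y i 0 ^+ 2 =
    \sum_(l < k) (sl l * dotv (vv l) x) ^+ 2.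
  by apply: eq_bigr => l _; rewrite -[in RHS]y_eq exprMn sl_sq.
have x_part : 0 <= \sum_(j < n) w j 0 * x j 0 + eta^-1 * sqnorm x
    + eta / 4 * \sum_(j < n) (supp x j)%:R * w j 0 ^+ 2.
  rewrite /sqnorm !mulr_sumr -!big_split; apply: sumr_ge0 => j _ /=; rewrite ffunE.
  have [->|_] := eqVneq (x j 0) 0; last by rewrite mul1r quad_x_ge0.
  by rewrite /= mul0r mulr0 expr0n /= !mulr0 !addr0.
have y_part : 0 <= \sum_(l < k) (sl l * dotv (vv l) x) ^+ 2
    - \sum_(l < k) al l 0 * (sl l * dotv (vv l) x) + 4^-1 * sqnorm al.
  by rewrite /sqnorm mulr_sumr -sumrB -big_split; apply: sumr_ge0 => l _; exact: quad_y_ge0.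
have b_part : \sum_(i < m) be i 0 * (A *m x) i 0 <= dotv be b.
  by apply: ler_sum => i _; rewrite ler_wpM2l.
have card : (l0norm x)%:R = \sum_(j < n) (supp x j)%:R :> R.
  by rewrite l0norm_sum; apply: eq_bigr => j _; rewrite ffunE.
rewrite y_sq card; lra.
Qed.

(* Conversely, at a stationary point of the Lagrangian for the pattern z
   (x = -(eta/2) diag(z) w, sqrt(lambda_l) <v_l, x> = alpha_l / 2, and
   complementary slackness) the objective is at most H(z, alpha, beta). *)
Lemma stationary_value (z : {ffun 'I_n -> bool}) x al be :
  (forall j, x j 0 = - (eta / 2) * (z j)%:R * wvec al be j 0) ->
  (forall l, sl l * dotv (vv l) x = al l 0 / 2) ->
  dotv be b = \sum_(i < m) be i 0 * (A *m x) i 0 ->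
  Uobj m hk lam c eta theta x (\col_l dotv (vv l) x)
    <= Hfun hk lam v c A b eta theta z al be.
Proof.
move=> xE slE csE.
rewrite /Uobj /Hfun -/(wvec al be) (lagrangian_identity al be x) -csE.
set w := wvec al be; set q := \sum_(j < n) (z j)%:R * w j 0 ^+ 2.
have wx : \sum_(j < n) w j 0 * x j 0 = - (eta / 2) * q.
  by rewrite /q mulr_sumr; apply: eq_bigr => j _; rewrite xE; ring.
have xx : eta^-1 * sqnorm x = eta / 4 * q.
  rewrite /sqnorm /q !mulr_sumr; apply: eq_bigr => j _; rewrite xE.
  by case: (z j) => /=; field; rewrite gt_eqF.
have ay : \sum_(l < k) al l 0 * (sl l * dotv (vv l) x) = 2^-1 * sqnorm al.
  by rewrite /sqnorm mulr_sumr; apply: eq_bigr => l _; rewrite slE; field.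
have yy : \sum_(i < k) lam (widen_ord hk i) * (\col_l dotv (vv l) x) i 0 ^+ 2 =
    4^-1 * sqnorm al.
  rewrite /sqnorm mulr_sumr; apply: eq_bigr => l _.
  by rewrite mxE -sl_sq -exprMn slE; field.
have card : (l0norm x)%:R <= \sum_(j < n) (z j)%:R :> R.
  rewrite l0norm_sum; apply: ler_sum => j _; rewrite xE.
  by case: (z j); rewrite /= ?mulr0 ?mul0r ?eqxx ?lexx //; case: (_ != _).
have := ler_wpM2l (ltW theta_gt0) card.
rewrite wx xx ay yy; lra.
Qed.

Definition dual_values (z : {ffun 'I_n -> bool}) : set (\bar R) :=
  [set r : \bar R | exists (alpha : 'cV[R]_k) (beta : 'cV[R]_m),
     (forall i, 0 <= beta i 0) /\ r = (Hfun hk lam v c A b eta theta z alpha beta)%:E].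



Section Encoding.
(* For a fixed pattern z, the restriction of U*_k to points supported in z is
   the projection of the anchor a = (-(sqrt eta / 2) diag(z) c, 0) onto a
   polyhedron in the variables t = (u, s) of R^(n+k), via x = sqrt eta u:
   inequalities  sqrt eta <diag(z) A_i, u> <= b_i  and equations
   s_l = sqrt(lambda_l) sqrt eta <diag(z) v_l, u>. *)
Variable z : {ffun 'I_n -> bool}.

Let se : R := Num.sqrt eta.
Let zr (j : 'I_n) : R := (z j)%:R.

Lemma se_sq : se ^+ 2 = eta. Proof. by rewrite sqr_sqrtr // ltW. Qed.

Lemma zr_sq j : zr j * zr j = zr j.
Proof. by rewrite /zr; case: (z j); rewrite ?mul1r ?mul0r. Qed.

Definition mask (u : 'cV[R]_n) : 'cV[R]_n := \col_j (zr j * u j 0).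

Definition enc_G (i : nat) : 'cV[R]_(n + k) :=
  oapp (fun i' : 'I_m => col_mx (se *: mask (\col_j A i' j)) 0) 0 (insub i).
Definition enc_h (i : nat) : R := oapp (fun i' : 'I_m => b i' 0) 0 (insub i).
Definition enc_E (i : nat) : 'cV[R]_(n + k) :=
  oapp (fun l : 'I_k => col_mx (- (sl l * se) *: mask (vv l)) (delta_mx l 0)) 0 (insub i).
Definition enc_a : 'cV[R]_(n + k) := col_mx (- (se / 2) *: mask c) 0.

Lemma enc_h_ord (i : 'I_m) : enc_h i = b i 0.
Proof. by rewrite /enc_h valK. Qed.

Lemma dot_enc_G (i : 'I_m) t :
  dotv (enc_G i) t = \sum_(j < n) se * (zr j * A i j) * t (lshift k j) 0.
Proof.
rewrite /enc_G valK /= dotv_col [X in _ + X]big1 ?addr0 => [|l _].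
  by apply: eq_bigr => j _; rewrite !mxE.
by rewrite mxE mul0r.
Qed.

Lemma dot_enc_E (l : 'I_k) t : dotv (enc_E l) t =
  \sum_(j < n) - (sl l * se) * (zr j * vv l j 0) * t (lshift k j) 0 + t (rshift n l) 0.
Proof.
rewrite /enc_E valK /= dotv_col; congr (_ + _); first by apply: eq_bigr => j _; rewrite !mxE.
rewrite (bigD1 l) //= big1 => [|l' l'_neq]; first by rewrite mxE !eqxx mul1r addr0.
by rewrite mxE (negbTE l'_neq) mul0r.
Qed.

Lemma comb_enc_top (mu nu : nat -> R) j :
  (comb enc_G mu m + comb enc_E nu k) (lshift k j) 0 =
  se * zr j * (\sum_(i < m) A i j * mu i - \sum_(l < k) vv l j 0 * (sl l * nu l)).
Proof.
rewrite mxE /comb !summxE mulrBr !mulr_sumr -sumrN; congr (_ + _).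
  by apply: eq_bigr => i _; rewrite /enc_G valK /= mxE col_mxEu !mxE; ring.
by apply: eq_bigr => l _; rewrite /enc_E valK /= mxE col_mxEu !mxE; ring.
Qed.

Lemma comb_enc_bot (mu nu : nat -> R) l :
  (comb enc_G mu m + comb enc_E nu k) (rshift n l) 0 = nu l.
Proof.
rewrite mxE /comb !summxE big1 ?add0r => [|i _]; last first.
  by rewrite /enc_G valK /= mxE col_mxEd mxE mulr0.
rewrite (bigD1 l) //= big1 => [|l' l'_neq].
  by rewrite /enc_E valK /= mxE col_mxEd mxE !eqxx mulr1 addr0.
by rewrite /enc_E valK /= mxE col_mxEd mxE eq_sym (negbTE l'_neq) mulr0.
Qed.

(* The multipliers of a projection are the dual variables: alpha = -nu and
   beta = mu, and the projection is t = (-(sqrt eta / 2) diag(z) w, alpha / 2). *)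
Lemma enc_projection_shape t (mu nu : nat -> R) :
  t = enc_a - 2^-1 *: (comb enc_G mu m + comb enc_E nu k) ->
  (forall j, t (lshift k j) 0 =
     - (se / 2) * zr j * wvec (\col_l (- nu l)) (\col_i mu i) j 0) /\
  (forall l, t (rshift n l) 0 = - nu l / 2).
Proof.
move=> tE; set W := comb enc_G mu m + comb enc_E nu k in tE.
have tE' i : t i 0 = enc_a i 0 - 2^-1 * W i 0 by rewrite tE !mxE.
split=> [j|l]; rewrite tE' /W.
  rewrite comb_enc_top wvecE /enc_a col_mxEu !mxE.
  have -> : \sum_(l < k) vv l j 0 * (sl l * (\col_l0 - nu l0) l 0) =
      - \sum_(l < k) vv l j 0 * (sl l * nu l).
    by rewrite -sumrN; apply: eq_bigr => l _; rewrite mxE; ring.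
  have -> : \sum_(i < m) A i j * (\col_i0 mu i0) i 0 = \sum_(i < m) A i j * mu i.
    by apply: eq_bigr => i _; rewrite mxE.
  ring.
by rewrite comb_enc_bot /enc_a col_mxEd mxE; ring.
Qed.

(* Strong duality for the pattern z when the encoded polyhedron is nonempty:
   the projection yields a feasible x supported in z whose objective value
   is attained by H(z, ., .). *)
Lemma enc_kkt_bound t (mu nu : nat -> R) :
  kkt enc_G enc_h m enc_E (fun=> 0) k enc_a t mu nu ->
  (Ustar hk lam v c A b eta theta <= ereal_sup (dual_values z))%E.
Proof.
case=> mu_ge0 [Gt Et] tE cs.
have [t_top t_bot] := enc_projection_shape tE.
set al : 'cV[R]_k := \col_l (- nu l); set be : 'cV[R]_m := \col_i mu i.
set x : 'cV[R]_n := \col_j (se * t (lshift k j) 0).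
have t_masked j : zr j * t (lshift k j) 0 = t (lshift k j) 0.
  by rewrite t_top !mulrA [zr j * _]mulrC -!mulrA [zr j * (zr j * _)]mulrA zr_sq.
have xE j : x j 0 = - (eta / 2) * zr j * wvec al be j 0.
  by rewrite mxE t_top !mulrA -se_sq; field.
have Ax (i : 'I_m) : dotv (enc_G i) t = (A *m x) i 0.
  rewrite dot_enc_G mxE; apply: eq_bigr => j _.
  by rewrite mxE -[in RHS](t_masked j); ring.
have slE l : sl l * dotv (vv l) x = al l 0 / 2.
  have := Et l (ltn_ord l); rewrite dot_enc_E t_bot => sum_eq.
  have -> : sl l * dotv (vv l) x =
      - \sum_(j < n) - (sl l * se) * (zr j * vv l j 0) * t (lshift k j) 0.
    rewrite /dotv mulr_sumr -sumrN; apply: eq_bigr => j _.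
    by rewrite mxE -[in LHS](t_masked j); ring.
  by rewrite mxE; move: sum_eq; set S := \sum_(j < n) _; lra.
have csE : dotv be b = \sum_(i < m) be i 0 * (A *m x) i 0.
  have slack0 : \sum_(i < m) mu i * (b i 0 - (A *m x) i 0) = slack enc_G enc_h mu m t.
    by rewrite /slack; apply: eq_bigr => i _; rewrite enc_h_ord Ax.
  rewrite cs in slack0.
  apply/eqP; rewrite -subr_eq0 /dotv -sumrB; apply/eqP/(etrans _ slack0).
  by apply: eq_bigr => i _; rewrite !mxE mulrBr.
apply: (@le_trans _ _ (Uobj m hk lam c eta theta x (\col_l dotv (vv l) x))%:E).
  apply: ereal_inf_lbound; exists x, (\col_l dotv (vv l) x); split=> //.
  split=> i; last by rewrite mxE.
  by rewrite -Ax; have := Gt i (ltn_ord i); rewrite enc_h_ord.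
apply: (@le_trans _ _ (Hfun hk lam v c A b eta theta z al be)%:E).
  by rewrite lee_fin; exact: stationary_value.
apply: ereal_sup_ubound; exists al, be; split=> // i; rewrite mxE; exact: mu_ge0.
Qed.

(* When the encoded polyhedron is empty, its Farkas certificate gives a ray
   of multipliers beta along which H(z, 0, beta) is unbounded. *)
Lemma enc_cert_unbounded : infeas_cert enc_G enc_h m enc_E (fun=> 0) k ->
  ereal_sup (dual_values z) = +oo%E.
Proof.
case=> mu [nu [mu_ge0 [W0 neg]]].
have nu0 (l : 'I_k) : nu l = 0.
  by have := congr1 (fun M : 'cV[R]_(n + k) => M (rshift n l) 0) W0; rewrite /= comb_enc_bot mxE.
have zAmu0 (j : 'I_n) : zr j * \sum_(i < m) A i j * mu i = 0.
  have := congr1 (fun M : 'cV[R]_(n + k) => M (lshift k j) 0) W0.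
  rewrite /= comb_enc_top mxE [X in _ - X]big1 => [|l _]; last by rewrite nu0 !mulr0.
  by rewrite subr0 -mulrA => /eqP; rewrite mulf_eq0 gt_eqF ?sqrtr_gt0 //= => /eqP.
set B := \sum_(i < m) mu i * b i 0.
have B_lt0 : B < 0.
  move: neg; rewrite /combr [X in _ + X]big1 => [|l _]; last exact: mulr0.
  by rewrite addr0 /B; under eq_bigr do rewrite enc_h_ord.
set K := theta * \sum_(j < n) (z j)%:R - eta / 4 * \sum_(j < n) zr j * c j 0 ^+ 2.
apply: ereal_sup_unbounded => r.
set s := `|r - K| / (- B).
have s_ge0 : 0 <= s by rewrite divr_ge0 // oppr_ge0 ltW.
exists (Hfun hk lam v c A b eta theta z 0 (s *: \col_i mu i))%:E.
  by exists 0, (s *: \col_i mu i); split=> // i; rewrite !mxE mulr_ge0 ?mu_ge0.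
rewrite lee_fin /Hfun mulmx0 addr0.
have -> : \sum_(j < n) (z j)%:R * (c + A^T *m (s *: \col_i mu i)) j 0 ^+ 2 =
    \sum_(j < n) zr j * c j 0 ^+ 2.
  apply: eq_bigr => j _; rewrite !mxE.
  have -> : \sum_(i < m) A^T j i * (s *: \col_i mu i) i 0 = s * \sum_(i < m) A i j * mu i.
    by rewrite mulr_sumr; apply: eq_bigr => i _; rewrite !mxE; ring.
  have := zAmu0 j; move: (\sum_(i < m) A i j * mu i) => q zq0.
  have -> : (z j)%:R * (c j 0 + s * q) ^+ 2 = zr j * c j 0 ^+ 2 + zr j * q * (s * (2 * c j 0 + s * q)).
    by rewrite /zr; ring.
  by rewrite zq0 mul0r addr0.
have -> : dotv (s *: \col_i mu i) b = s * B.
  by rewrite dotvZl /B /dotv; congr (_ * _); apply: eq_bigr => i _; rewrite mxE.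
have -> : sqnorm (0 : 'cV[R]_k) = 0 by rewrite /sqnorm big1 // => l _; rewrite mxE expr0n.
have -> : s * B = - `|r - K| by rewrite /s; field; rewrite lt_eqF.
have := ler_norm (r - K); rewrite /K; lra.
Qed.

Lemma Ustar_le_dual :
  (Ustar hk lam v c A b eta theta <= ereal_sup (dual_values z))%E.
Proof.
case: (projection_alternative enc_G enc_h m enc_E (fun=> 0) k enc_a).
  by move/enc_cert_unbounded ->; exact: leey.
by case=> t [mu [nu K]]; exact: enc_kkt_bound K.
Qed.

End Encoding.

Lemma Ustar_le_minmaxH :
  (Ustar hk lam v c A b eta theta <= minmaxH hk lam v c A b eta theta)%E.
Proof.
rewrite /minmaxH; elim/big_ind: _ => [|x y ? ?|z _]; first exact: leey.
  by rewrite le_min; apply/andP.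
exact: Ustar_le_dual.
Qed.

Lemma minmaxH_le_Ustar :
  (minmaxH hk lam v c A b eta theta <= Ustar hk lam v c A b eta theta)%E.
Proof.
apply/ereal_infP => _ [x [y [feas ->]]].
rewrite /minmaxH (bigD1 (supp x)) //= ge_min; apply/orP; left.
apply/ereal_supP => _ [al [be [be_ge0 ->]]].
by rewrite lee_fin; exact: weak_duality.
Qed.

End Duality.

Theorem propositionC1 (R : realType) (n m k : nat) (hk : (k <= n)%N)
  (Q : 'M[R]_n) (lam : 'I_n -> R) (v : 'I_n -> 'cV[R]_n)
  (c : 'cV[R]_n) (A : 'M[R]_(m, n)) (b : 'cV[R]_m) (eta theta : R) :
  Q^T = Q ->
  (forall x : 'cV[R]_n, 0 <= (x^T *m Q *m x) 0 0) ->
  Q = \sum_(i < n) lam i *: (v i *m (v i)^T) ->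
  (forall i j : 'I_n, (i <= j)%N -> lam j <= lam i) ->
  (forall i : 'I_n, 0 <= lam i) ->
  (forall i j : 'I_n, dotv (v i) (v j) = (i == j)%:R) ->
  0 < eta -> 0 < theta ->
  Ustar hk lam v c A b eta theta = minmaxH hk lam v c A b eta theta.
Proof.
move=> _ _ _ _ lam_ge0 _ eta_gt0 theta_gt0.
apply/eqP; rewrite eq_le Ustar_le_minmaxH //.
exact: minmaxH_le_Ustar.
Qed.
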